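(* Let $\Omega\subset\mathbb{R}^n$ be a bounded convex domain with smooth boundary and outer unit normal $\nu$, let $\vec f:\Omega\times\mathbb{R}\times[0,\infty)\to\mathbb{R}^{n+1}$, and let $u$ be a classical solution, $C^2$ up to $\partial\Omega$ in space for each $t>0$, of \[ \frac{\partial_t u}{\sqrt{1+|du|^2}}=\operatorname{div}\Big(\frac{du}{\sqrt{1+|du|^2}}\Big)+\vec f(x,u,t)\cdot\vec n\ \text{ in }\Omega,\ t>0,\qquad du\cdot\nu|_{\partial\Omega}=0,\ t>0, \] with $\vec n=\frac{1}{\sqrt{1+|du|^2}}(-du,1)$. Let $v:=\sqrt{1+|du|^2}$. Then for all $t>0$, \[ (D_{\Gamma_t}v\cdot\vec\nu)\big|_{\partial(\Omega\times\mathbb{R})}\le 0 . \]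
   Context: $\Gamma_t=\{(x,u(x,t)):x\in\Omega\}$. $v$ is regarded as a function on $\Omega\times\mathbb{R}$ independent of $x_{n+1}$, $D$ is the gradient in $\mathbb{R}^{n+1}$, and $D_{\Gamma_t}v:=Dv-(Dv\cdot\vec n)\vec n$ is its tangential gradient along $\Gamma_t$. $\vec\nu=(\nu,0)$ is the outer unit normal of the cylinder $\Omega\times\mathbb{R}$; the inequality is evaluated at the boundary points $(x,u(x,t))$, $x\in\partial\Omega$. *)

From HB Require Import structures.
From mathcomp Require Import all_boot all_order all_algebra.
From mathcomp Require Import all_classical all_reals all_analysis.
Set Implicit Arguments. Unset Strict Implicit. Unset Printing Implicit Defensive.
Import Order.TTheory GRing.Theory Num.Theory.
Import numFieldNormedType.Exports.
Local Open Scope classical_set_scope.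
Local Open Scope ring_scope.

Section Defs.
Variable R : realType.

Definition evec (n : nat) (i : 'I_n) : 'rV[R]_n := delta_mx 0 i.

Definition dotv (m : nat) (a b : 'rV[R]_m) : R := \sum_(i < m) a 0 i * b 0 i.

Definition pd (n : nat) (i : 'I_n) (g : 'rV[R]_n -> R) : 'rV[R]_n -> R :=
  fun x => derive g x (evec i).

Definition grad (n : nat) (g : 'rV[R]_n -> R) (x : 'rV[R]_n) : 'rV[R]_n :=
  \row_i pd i g x.

Definition divg (n : nat) (F : 'rV[R]_n -> 'rV[R]_n) (x : 'rV[R]_n) : R :=
  \sum_(i < n) pd i (fun y => F y 0 i) x.

Fixpoint Ck_on (n : nat) (U : set 'rV[R]_n) (k : nat) (g : 'rV[R]_n -> R) : Prop :=
  match k with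
  | 0 => forall x, U x -> {for x, continuous g}
  | k.+1 => (forall x, U x -> differentiable g x) /\
            (forall i, Ck_on U k (pd i g))
  end.

Definition smooth (n : nat) (g : 'rV[R]_n -> R) : Prop :=
  forall k, Ck_on setT k g.

(* Omega = {rho < 0}, a smooth bounded convex domain with global
   smooth defining function rho (grad rho <> 0 on {rho = 0} = boundary) *)
Definition Omega (n : nat) (rho : 'rV[R]_n -> R) : set 'rV[R]_n :=
  [set x | rho x < 0].

Definition bdry (n : nat) (rho : 'rV[R]_n -> R) : set 'rV[R]_n :=
  [set x | rho x = 0].

Definition convex_dom (n : nat) (S : set 'rV[R]_n) : Prop :=
  forall x y, S x -> S y -> forall l : R, 0 <= l -> l <= 1 ->
    S ((1 - l) *: x + l *: y).

Definition bounded_dom (n : nat) (S : set 'rV[R]_n) : Prop :=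
  exists M : R, forall x, S x -> dotv x x <= M.

Definition smooth_bounded_convex_domain (n : nat) (rho : 'rV[R]_n -> R) : Prop :=
  [/\ smooth rho,
      (forall x, rho x = 0 -> grad rho x != 0),
      Omega rho !=set0,
      convex_dom (Omega rho) &
      bounded_dom (Omega rho)].

Definition onormal (n : nat) (rho : 'rV[R]_n -> R) (x : 'rV[R]_n) : 'rV[R]_n :=
  (Num.sqrt (dotv (grad rho x) (grad rho x)))^-1 *: grad rho x.

Definition du (n : nat) (u : 'rV[R]_n -> R -> R) (x : 'rV[R]_n) (t : R) : 'rV[R]_n :=
  grad (fun y => u y t) x.

Definition vfun (n : nat) (u : 'rV[R]_n -> R -> R) (x : 'rV[R]_n) (t : R) : R :=
  Num.sqrt (1 + dotv (du u x t) (du u x t)).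

Definition nvec (n : nat) (u : 'rV[R]_n -> R -> R) (x : 'rV[R]_n) (t : R) : 'rV[R]_(n + 1) :=
  (vfun u x t)^-1 *: row_mx (- du u x t) (const_mx 1).

(* D v in R^{n+1}, v regarded as independent of x_{n+1} *)
Definition Dv (n : nat) (u : 'rV[R]_n -> R -> R) (x : 'rV[R]_n) (t : R) : 'rV[R]_(n + 1) :=
  row_mx (grad (fun y => vfun u y t) x) 0.

Definition DGamma_v (n : nat) (u : 'rV[R]_n -> R -> R) (x : 'rV[R]_n) (t : R) : 'rV[R]_(n + 1) :=
  Dv u x t - dotv (Dv u x t) (nvec u x t) *: nvec u x t.

(* outer unit normal (nu, 0) of the cylinder Omega x R *)
Definition cyl_normal (n : nat) (rho : 'rV[R]_n -> R) (x : 'rV[R]_n) : 'rV[R]_(n + 1) :=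
  row_mx (onormal rho x) 0.

End Defs.

From HB Require Import structures.
From mathcomp Require Import all_boot all_order all_algebra.
From mathcomp Require Import all_classical all_reals all_analysis.
From mathcomp Require Import ring lra.
Import Order.TTheory GRing.Theory Num.Theory.
Import numFieldNormedType.Exports.
Local Open Scope classical_set_scope.
Local Open Scope ring_scope.

(* At a boundary point x put tau = du(x) and N = grad rho(x).  The Neumann
   condition makes tau tangent to the boundary and the graph normal n
   orthogonal to (N, 0), so only Dv . nu is left.  Differentiating
   v = sqrt (1 + |du|^2) and using the symmetry of second derivatives gives
   v (Dv . N) = sum_j D_tau (d_j u) d_j rho.  The function du . grad rho
   vanishes on the boundary, so its derivative along the tangent vector tau
   vanishes; this turns the sum into - D^2 rho (tau, tau).  Finally, convexity
   of {rho < 0} makes the second derivative of rho along a tangent direction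
   nonnegative at a boundary point. *)

Lemma norm_le_eps_eq0 (R : realFieldType) (m C : R) :
  (forall e, 0 < e -> `|m| <= e * C) -> m = 0.
Proof.
move=> small; apply/normr0_eq0/eqP; rewrite eq_le normr_ge0 andbT.
apply/ler_addgt0Pr => e e0; rewrite add0r.
have C1 : 0 < `|C| + 1 by rewrite ltr_wpDl.
apply: (le_trans (small _ (divr_gt0 e0 C1))).
rewrite mulrAC ler_pdivrMr // ler_pM2l //.
by rewrite (le_trans (ler_norm C)) // lerDl.
Qed.

Lemma exists_pos_lt2 {R : realFieldType} {d1 d2 : R} :
  0 < d1 -> 0 < d2 -> exists2 s, 0 < s & s < d1 /\ s < d2.
Proof.
move=> d10 d20; have m0 : 0 < Num.min d1 d2 by rewrite lt_min d10.
exists (Num.min d1 d2 / 2); first by rewrite divr_gt0.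
have lt_m : Num.min d1 d2 / 2 < Num.min d1 d2 by lra.
by split; apply: (lt_le_trans lt_m); rewrite ge_min lexx ?orbT.
Qed.

Lemma differentiable_approx {R : realType} {W : normedModType R}
    {g : W -> R} {a : W} : differentiable g a -> forall e, 0 < e -> exists2 d, 0 < d &
  forall z, `|z| < d -> `|g (a + z) - g a - 'd g a z| <= e * `|z|.
Proof.
move=> dg e e0.
have g_o : (fun z => g (a + z)) = (fun z => g a + 'd g a z) +o_ (nbhs (0 : W)) id.
  by apply/eqaddoE; rewrite funeqE => z; exact: diff_locallyxC.
move/eqaddoP: g_o => /(_ e e0) /nbhs_norm0P [d d0 gd].
by exists d => // z /gd /=; rewrite opprD addrA.
Qed.

Lemma IVT_sign_change (R : realType) (phi : R -> R) (c : R) : 0 <= c ->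
  {within `[- c, c], continuous phi} -> phi (- c) < 0 -> 0 < phi c ->
  exists2 b, `|b| <= c & phi b = 0.
Proof.
move=> c0 phi_cont phi_neg phi_pos.
have c_le : - c <= c by rewrite lerNl (le_trans _ c0) // oppr_le0.
have phi_0 : Num.min (phi (- c)) (phi c) <= 0 <= Num.max (phi (- c)) (phi c).
  by rewrite ge_min le_max (ltW phi_neg) (ltW phi_pos) orbT.
have [b b_in phib0] := IVT c_le phi_cont phi_0.
exists b => //; apply/ler_normlP.
by move: b_in; rewrite in_itv /= => /andP [? ?]; split; rewrite // lerNl.
Qed.

Lemma derive2_lt0_strict_max (R : realType) (f : R -> R) :
  (forall r, derivable f r 1) -> f^`()%classic 0 = 0 ->
  derivable f^`()%classic 0 1 -> f^`()^`()%classic 0 < 0 ->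
  exists2 s, 0 < s & f s < f 0 /\ f (- s) < f 0.
Proof.
move=> df f'0 df' f''0; set D := f^`()^`()%classic 0 in f''0.
have e0 : 0 < - D / 2 by rewrite divr_gt0 // oppr_gt0.
have /derivable1_diffP /differentiable_approx /(_ _ e0) [d d0 f'_approx] := df'.
have f'_near h : `|h| < d -> `|f^`()%classic h - h * D| <= - D / 2 * `|h|.
  by move=> /f'_approx; rewrite add0r f'0 subr0 (deriv1E df').
have f'_neg h : h \in `]0, d / 2[ -> f^`()%classic h < 0.
  rewrite in_itv /= => /andP [h0 hd].
  have /f'_near /ler_normlP [_] : `|h| < d by rewrite gtr0_norm //; lra.
  by rewrite gtr0_norm //; nra.
have f'_pos h : h \in `]- (d / 2), 0[ -> 0 < f^`()%classic h.
  rewrite in_itv /= => /andP [hd h0].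
  have /f'_near /ler_normlP [+ _] : `|h| < d by rewrite ltr0_norm //; lra.
  by rewrite ltr0_norm //; nra.
have f_cont (a b : R) : {within `[a, b], continuous f}.
  by apply: derivable_within_continuous => r _; exact: df.
have s0 : 0 < d / 2 by rewrite divr_gt0.
exists (d / 2) => //; split.
- apply: (ltr0_derive1_lt_cc (fun r _ => df r) f'_neg (f_cont _ _)) => //.
  + by rewrite in_itv /= lexx ltW.
  + by rewrite in_itv /= lexx ltW.
- apply: (gtr0_derive1_lt_cc (fun r _ => df r) f'_pos (f_cont _ _)).
  + by rewrite in_itv /= lexx lerNl oppr0 ltW.
  + by rewrite in_itv /= lexx lerNl oppr0 ltW.
  + by rewrite oppr_lt0.
Qed.

Section DirectionalDerivative.
Context {R : realType} {V : normedModType R}.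
Implicit Types (f : V -> R) (x v : V).

Let line_quotientE f x v r0 :
  (fun h : R => h^-1 *: (((fun r : R => f (x + r *: v)) \o shift r0) (h *: 1)
     - (fun r : R => f (x + r *: v)) r0)) =
  (fun h : R => h^-1 *: ((f \o shift (x + r0 *: v)) (h *: v) - f (x + r0 *: v))).
Proof.
apply/funext => h /=; congr (_ *: (f _ - _)).
by rewrite /shift /= -[h%:A]/(h * 1) mulr1 scalerDl addrCA addrA.
Qed.

Lemma derive_line f x v r0 :
  'D_1 (fun r : R => f (x + r *: v)) r0 = 'D_v f (x + r0 *: v).
Proof. by rewrite /derive line_quotientE. Qed.

Lemma derivable_line f x v r0 :
  derivable (fun r : R => f (x + r *: v)) r0 1 = derivable f (x + r0 *: v) v.
Proof. by rewrite /derivable line_quotientE. Qed.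

Lemma is_derive_line f x v r0 : derivable f (x + r0 *: v) v ->
  is_derive r0 1 (fun r : R => f (x + r *: v)) ('D_v f (x + r0 *: v)).
Proof. by rewrite -derivable_line -derive_line; exact: derivableP. Qed.

Lemma convex_sublevel_derive2_ge0 (rho : V -> R) x tau :
  (forall y, derivable rho y tau) ->
  (forall y z l, rho y < 0 -> rho z < 0 -> 0 <= l -> l <= 1 ->
    rho ((1 - l) *: y + l *: z) < 0) ->
  rho x = 0 -> 'D_tau rho x = 0 -> derivable ('D_tau rho) x tau ->
  0 <= 'D_tau ('D_tau rho) x.
Proof.
(* Otherwise x would be the midpoint of two points of {rho < 0}. *)
move=> drho cvx rhox0 Drho0 dDrho.
set g := fun r : R => rho (x + r *: tau).
have g'E : g^`()%classic = fun r => 'D_tau rho (x + r *: tau).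
  by apply/funext => r; rewrite derive1E derive_line.
rewrite leNgt; apply/negP => D2_lt0.
have [||||s s0 []] := @derive2_lt0_strict_max _ g.
- by move=> r; rewrite /g derivable_line.
- by rewrite g'E scale0r addr0.
- by rewrite g'E (derivable_line ('D_tau rho)) scale0r addr0.
- by rewrite g'E derive1E (derive_line ('D_tau rho)) scale0r addr0.
rewrite /g scale0r addr0 rhox0 => gs gNs.
have half0 : (0 : R) <= 2^-1 by rewrite invr_ge0.
have half1 : (2^-1 : R) <= 1 by rewrite invf_le1 // ler1n.
have := cvx _ _ _ gs gNs half0 half1.
have -> : (1 - 2^-1) *: (x + s *: tau) + 2^-1 *: (x + - s *: tau) = x.
  rewrite !scalerDr !scalerA addrACA -!scalerDl.
  have -> : (1 - 2^-1 + 2^-1 : R) = 1 by ring.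
  have -> : ((1 - 2^-1) * s + 2^-1 * - s : R) = 0 by field.
  by rewrite scale1r scale0r addr0.
by rewrite rhox0 ltxx.
Qed.

Lemma derive_sqrt_comp (S : V -> R) x v : derivable S x v -> 0 < S x ->
  'D_v (fun y => Num.sqrt (S y)) x = (2 * Num.sqrt (S x))^-1 * 'D_v S x.
Proof.
move=> dS Sx0.
have lineE (f : V -> R) : 'D_v f x = (fun r : R => f (x + r *: v))^`()%classic 0.
  by rewrite derive1E derive_line scale0r addr0.
have dS0 : derivable (fun r : R => S (x + r *: v)) 0 1.
  by rewrite derivable_line scale0r addr0.
rewrite !lineE -[fun r => Num.sqrt _]/(Num.sqrt \o fun r : R => S (x + r *: v)).
rewrite derive1_comp //= scale0r addr0; last by have [] := is_derive1_sqrt Sx0.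
by rewrite derive1E derive_sqrt.
Qed.

Lemma derive_sum_mul n (f g : 'I_n -> V -> R) x v :
  (forall i, derivable (f i) x v) -> (forall i, derivable (g i) x v) ->
  'D_v (fun y => \sum_(i < n) f i y * g i y) x =
    \sum_(i < n) ('D_v (f i) x * g i x + f i x * 'D_v (g i) x).
Proof.
move=> df dg.
have -> : (fun y => \sum_(i < n) f i y * g i y) = \sum_(i < n) (f i * g i).
  by rewrite fct_sumE.
rewrite derive_sum => [|i]; last exact: derivableM.
apply: eq_bigr => i _; rewrite deriveM //.
by rewrite /GRing.scale /= addrC mulrC; congr (_ + _); rewrite mulrC.
Qed.

Definition second_difference (w : V -> R) x a b (s : R) :=
  w (x + s *: a + s *: b) - w (x + s *: a) - w (x + s *: b) + w x.

Lemma second_differenceC w x a b s :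
  second_difference w x a b s = second_difference w x b a s.
Proof. by rewrite /second_difference -!addrA [s *: b + _]addrC; ring. Qed.

Lemma second_difference_mvt (w : V -> R) x a b s : 0 < s ->
  (forall c, 0 <= c <= s -> differentiable w (x + s *: a + c *: b)) ->
  (forall c, 0 <= c <= s -> differentiable w (x + c *: b)) ->
  exists2 c, 0 <= c <= s & second_difference w x a b s =
    s * ('D_b w (x + s *: a + c *: b) - 'D_b w (x + c *: b)).
Proof.
move=> s0 dw_a dw.
set phi := fun c : R => w (x + s *: a + c *: b) - w (x + c *: b).
have phi_derive c : c \in `[0, s] ->
    is_derive c 1 phi ('D_b w (x + s *: a + c *: b) - 'D_b w (x + c *: b)).
  rewrite in_itv /= => cs.
  by apply: is_deriveB; apply: is_derive_line; apply: diff_derivable; auto.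
have phi_cont : {within `[0, s], continuous phi}.
  by apply: derivable_within_continuous => c /phi_derive [].
have [c c_in phi_mvt] :=
  MVT s0 (fun c c_in => phi_derive c (subset_itv_oo_cc c_in)) phi_cont.
exists c; first by move: c_in; rewrite in_itv /= => /andP [? ?]; rewrite !ltW.
have -> : second_difference w x a b s = phi s - phi 0.
  by rewrite /phi /second_difference !scale0r !addr0; ring.
by rewrite phi_mvt subr0 mulrC.
Qed.

Lemma second_difference_approx (w : V -> R) x a b :
  (\forall y \near x, differentiable w y) -> differentiable ('D_b w) x ->
  forall e, 0 < e -> exists2 d, 0 < d & forall s, 0 < s -> s < d ->
  `|second_difference w x a b s - s ^+ 2 * 'D_a ('D_b w) x| <= e * s ^+ 2.
Proof.
move=> /nbhs_normP [r r0 w_near] dG e e0.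
have w_diff z : `|z| < r -> differentiable w (x + z).
  by move=> zr; apply: w_near; rewrite /ball_ /= opprD addrA subrr sub0r normrN.
set G := 'D_b w; set C := `|a| + `|b|.
have C1 : 0 < C + 1 by rewrite ltr_wpDl // addr_ge0.
have [e' e'0 e'C] : exists2 e', 0 < e' & e' * (2 * C) <= e.
  exists (e / (2 * C + 1)); first by rewrite divr_gt0 // ltr_wpDl // mulr_ge0 ?addr_ge0.
  rewrite mulrAC ler_pdivrMr ?ltr_wpDl ?mulr_ge0 ?addr_ge0 //.
  by rewrite ler_pM2l // lerDl.
have [d1 d10 G_approx] := differentiable_approx dG _ e'0.
have [d d0 [d_d1 d_r]] := exists_pos_lt2 (divr_gt0 d10 C1) (divr_gt0 r0 C1).
exists d => // s s0 sd.
have sC_lt q : d < q / (C + 1) -> s * C < q.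
  move=> dq; apply: (le_lt_trans (y := s * (C + 1))); first by rewrite ler_pM2l // lerDl.
  by rewrite -ltr_pdivlMr // (lt_trans sd dq).
have norm_sa c : 0 <= c <= s -> `|s *: a + c *: b| <= s * C.
  move=> /andP [c0 cs]; apply: (le_trans (ler_normD _ _)); rewrite !normrZ.
  rewrite (ger0_norm (ltW s0)) (ger0_norm c0) mulrDr lerD2l.
  by apply: ler_wpM2r.
have norm_b c : 0 <= c <= s -> `|c *: b| <= s * C.
  move=> /andP [c0 cs]; rewrite normrZ (ger0_norm c0).
  apply: (le_trans (y := s * `|b|)); first by apply: ler_wpM2r.
  by rewrite ler_pM2l // lerDr.
have dw_a c : 0 <= c <= s -> differentiable w (x + s *: a + c *: b).
  by move=> cs; rewrite -addrA; apply/w_diff/(le_lt_trans (norm_sa c cs))/sC_lt.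
have dw_b c : 0 <= c <= s -> differentiable w (x + c *: b).
  by move=> cs; apply/w_diff/(le_lt_trans (norm_b c cs))/sC_lt.
have [c cs ->] := @second_difference_mvt w x a b s s0 dw_a dw_b.
have A_le := G_approx _ (le_lt_trans (norm_sa c cs) (sC_lt _ d_d1)).
have B_le := G_approx _ (le_lt_trans (norm_b c cs) (sC_lt _ d_d1)).
have DaG : 'D_a G x = 'd G x a by rewrite deriveE.
have -> : G (x + s *: a + c *: b) - G (x + c *: b) =
    (G (x + (s *: a + c *: b)) - G x - 'd G x (s *: a + c *: b))
    - (G (x + c *: b) - G x - 'd G x (c *: b)) + s * 'D_a G x.
  by rewrite DaG addrA linearD !linearZ /= /GRing.scale /=; ring.
move: A_le B_le; set A := G (x + (_ + _)) - _ - _; set B := G (x + _) - _ - _.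
move=> A_le B_le.
have -> : s * (A - B + s * 'D_a G x) - s ^+ 2 * 'D_a G x = s * (A - B) by ring.
rewrite normrM (ger0_norm (ltW s0)).
have AB_le : `|A - B| <= e' * (s * C) + e' * (s * C).
  apply: (le_trans (ler_normB _ _)); apply: lerD.
  - by apply: (le_trans A_le); apply: ler_wpM2l; [exact: ltW | exact: norm_sa].
  - by apply: (le_trans B_le); apply: ler_wpM2l; [exact: ltW | exact: norm_b].
apply: (le_trans (ler_wpM2l (ltW s0) AB_le)).
have -> : s * (e' * (s * C) + e' * (s * C)) = e' * (2 * C) * s ^+ 2 by ring.
by apply: ler_wpM2r; rewrite ?sqr_ge0.
Qed.

Lemma derive_mixedC (w : V -> R) x a b :
  (\forall y \near x, differentiable w y) ->
  differentiable ('D_b w) x -> differentiable ('D_a w) x ->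
  'D_a ('D_b w) x = 'D_b ('D_a w) x.
Proof.
move=> w_near dDb dDa; apply/eqP; rewrite -subr_eq0; apply/eqP.
apply: (@norm_le_eps_eq0 _ _ 2) => e e0.
have [d1 d10 approx_ab] := @second_difference_approx w x a b w_near dDb e e0.
have [d2 d20 approx_ba] := @second_difference_approx w x b a w_near dDa e e0.
have [s s0 [s_d1 s_d2]] := exists_pos_lt2 d10 d20.
have := approx_ab s s0 s_d1; have := approx_ba s s0 s_d2.
rewrite -second_differenceC.
move: (second_difference _ _ _ _ _) ('D_a ('D_b w) x) ('D_b ('D_a w) x) => D P Q.
move=> le_ba le_ab; have s2_0 : 0 < s ^+ 2 by rewrite exprn_gt0.
rewrite -(ler_pM2l s2_0).
have -> : s ^+ 2 * `|P - Q| = `|s ^+ 2 * (P - Q)|.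
  by rewrite normrM (ger0_norm (ltW s2_0)).
have -> : s ^+ 2 * (P - Q) = (D - s ^+ 2 * Q) - (D - s ^+ 2 * P) by ring.
apply: (le_trans (ler_normB _ _)); apply: (le_trans (lerD le_ba le_ab)).
by rewrite (_ : s ^+ 2 * (e * 2) = e * s ^+ 2 + e * s ^+ 2) //; ring.
Qed.

Lemma normDZ_le (tau N : V) {a b e : R} : 0 <= a -> `|b| <= e * a ->
  `|a *: tau + b *: N| <= a * (`|tau| + e * `|N|).
Proof.
move=> a0 ba; apply: (le_trans (ler_normD _ _)).
rewrite !normrZ (ger0_norm a0) mulrDr lerD2l mulrA [a * e]mulrC.
by apply: ler_wpM2r.
Qed.

(* By the intermediate value theorem along N, the zero set of rho is, to first
   order, a graph over the tangent direction tau. *)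
Lemma zero_near_tangent (rho : V -> R) x N tau :
  continuous rho -> differentiable rho x -> rho x = 0 ->
  0 < 'd rho x N -> 'd rho x tau = 0 ->
  forall e, 0 < e -> exists2 d, 0 < d & forall a, 0 < a -> a < d ->
  exists2 b, `|b| <= e * a & rho (x + (a *: tau + b *: N)) = 0.
Proof.
move=> rho_cont rho_diff rhox0 p0 tau0 e e0.
have lin a b : 'd rho x (a *: tau + b *: N) = b * 'd rho x N.
  by rewrite linearD !linearZ /= tau0 scaler0 add0r.
move: ('d rho x N) p0 lin => p p0 lin.
have [K K0 zK] : exists2 K, 0 <= K & forall a b, 0 <= a -> `|b| <= e * a ->
    `|a *: tau + b *: N| <= a * K.
  exists (`|tau| + e * `|N|); last by move=> a b; apply: normDZ_le.
  by rewrite addr_ge0 // mulr_ge0 // ltW.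
have K1 : 0 < K + 1 by rewrite ltr_wpDl.
have c0 : 0 < e * p / 2 / (K + 1) by rewrite !divr_gt0 ?mulr_gt0.
have [d1 d10 rho_approx] := differentiable_approx rho_diff _ c0.
exists (d1 / (K + 1)); first by rewrite divr_gt0.
move=> a a0 ad.
have aK : a * K < d1.
  apply: (le_lt_trans (y := a * (K + 1))); first by rewrite ler_pM2l // lerDl.
  by rewrite -ltr_pdivlMr.
have rho_line b : `|b| <= e * a ->
    `|rho (x + (a *: tau + b *: N)) - b * p| <= e * p / 2 * a.
  move=> ba; have zb := zK a b (ltW a0) ba.
  have := rho_approx _ (le_lt_trans zb aK); rewrite rhox0 subr0 lin.
  move/le_trans; apply; apply: (le_trans (ler_wpM2l (ltW c0) zb)).
  have -> : e * p / 2 / (K + 1) * (a * K) = e * p / 2 * a * (K / (K + 1)) by ring.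
  apply: ler_piMr; first by rewrite !mulr_ge0 // ltW.
  by rewrite ler_pdivrMr // mul1r lerDl.
have ea0 : 0 < e * a by rewrite mulr_gt0.
have epa0 : 0 < e * p / 2 * a by rewrite !mulr_gt0.
set phi := fun b : R => rho (x + (a *: tau + b *: N)).
have ea_norm : `|e * a| <= e * a by rewrite ger0_norm // ltW.
have phi_pos : 0 < phi (e * a).
  by have /ler_normlP [+ _] := rho_line _ ea_norm; rewrite /phi; nra.
have Nea_norm : `|- (e * a)| <= e * a by rewrite normrN.
have phi_neg : phi (- (e * a)) < 0.
  by have /ler_normlP [_] := rho_line _ Nea_norm; rewrite /phi; nra.
have phi_cont : {within `[- (e * a), e * a], continuous phi}.
  apply: continuous_subspaceT => b; apply: continuous_comp; last exact: rho_cont.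
  apply: continuousD; first exact: cst_continuous.
  apply: continuousD; first exact: cst_continuous.
  exact: scalel_continuous.
exact: IVT_sign_change (ltW ea0) phi_cont phi_neg phi_pos.
Qed.

Lemma diff_tangent_eq0 (rho h : V -> R) x N tau :
  continuous rho -> differentiable rho x -> differentiable h x ->
  (forall y, rho y = 0 -> h y = 0) -> rho x = 0 ->
  0 < 'd rho x N -> 'd rho x tau = 0 -> 'd h x tau = 0.
Proof.
move=> rho_cont rho_diff h_diff h0 rhox0 p0 tau0.
apply: (@norm_le_eps_eq0 _ _ (`|'d h x N| + 1)) => e e0.
have [K K0 zK] : exists2 K, 0 < K & forall a b, 0 <= a -> `|b| <= e * a ->
    `|a *: tau + b *: N| <= a * K.
  exists (`|tau| + e * `|N| + 1).
    by rewrite ltr_wpDl // addr_ge0 // mulr_ge0 // ltW.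
  move=> a b a0 ba; apply: (le_trans (normDZ_le tau N a0 ba)).
  by rewrite ler_wpM2l // lerDl.
have [d2 d20 h_approx] := differentiable_approx h_diff _ (divr_gt0 e0 K0).
have [d d0 zero_at] :=
  @zero_near_tangent rho x N tau rho_cont rho_diff rhox0 p0 tau0 _ e0.
have [a a0 [ad aK]] := exists_pos_lt2 d0 (divr_gt0 d20 K0).
rewrite ltr_pdivlMr // in aK.
have [b ba rho_b] := zero_at a a0 ad.
have zb := zK a b (ltW a0) ba.
have := h_approx _ (le_lt_trans zb aK).
rewrite (h0 _ rho_b) h0 // subr0 sub0r normrN linearD !linearZ /=.
move: ('d h x tau) ('d h x N) => m q le_mq.
have amq : `|a * m + b * q| <= e * a.
  apply: (le_trans le_mq); apply: (le_trans (ler_wpM2l _ zb)).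
    by rewrite ltW // divr_gt0.
  by rewrite mulrCA divfK ?gt_eqF // mulrC.
have bq : `|b * q| <= e * a * `|q| by rewrite normrM; apply: ler_wpM2r.
have am : a * `|m| <= `|a * m + b * q| + `|b * q|.
  rewrite -[a in a * `|m|](gtr0_norm a0) -normrM -{1}[a * m](addrK (b * q)).
  exact: ler_normB.
rewrite -(ler_pM2l a0); lra.
Qed.
End DirectionalDerivative.

Section DotProduct.
Context {R : realType}.

Lemma dotvZl n (a b : 'rV[R]_n) k : dotv (k *: a) b = k * dotv a b.
Proof. by rewrite /dotv mulr_sumr; apply: eq_bigr => i _; rewrite mxE mulrA. Qed.

Lemma dotvZr n (a b : 'rV[R]_n) k : dotv a (k *: b) = k * dotv a b.
Proof. by rewrite /dotv mulr_sumr; apply: eq_bigr => i _; rewrite mxE mulrCA. Qed.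

Lemma dotvBl n (a b c : 'rV[R]_n) : dotv (a - b) c = dotv a c - dotv b c.
Proof. by rewrite /dotv -sumrB; apply: eq_bigr => i _; rewrite !mxE mulrBl. Qed.

Lemma dotvNl n (a c : 'rV[R]_n) : dotv (- a) c = - dotv a c.
Proof. by rewrite /dotv -sumrN; apply: eq_bigr => i _; rewrite !mxE mulNr. Qed.

Lemma dotv0r n (a : 'rV[R]_n) : dotv a 0 = 0.
Proof. by rewrite /dotv big1 // => i _; rewrite mxE mulr0. Qed.

Lemma dotv_row_mx n m (a1 b1 : 'rV[R]_n) (a2 b2 : 'rV[R]_m) :
  dotv (row_mx a1 a2) (row_mx b1 b2) = dotv a1 b1 + dotv a2 b2.
Proof.
by rewrite /dotv big_split_ord /=; congr (_ + _); apply: eq_bigr => i _;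
  rewrite ?row_mxEl ?row_mxEr.
Qed.

Lemma dotvv_ge0 n (a : 'rV[R]_n) : 0 <= dotv a a.
Proof. by apply: sumr_ge0 => i _; rewrite -expr2 sqr_ge0. Qed.

Lemma dotvv_gt0 n (a : 'rV[R]_n) : a != 0 -> 0 < dotv a a.
Proof.
have sq_ge0 i : 0 <= a 0 i * a 0 i by rewrite -expr2 sqr_ge0.
move=> a_neq0; rewrite lt_def dotvv_ge0 andbT.
apply: contra a_neq0 => /eqP /psumr_eq0P a0; apply/eqP/rowP => i.
by have /eqP := a0 (fun i _ => sq_ge0 i) i isT; rewrite mulf_eq0 orbb mxE => /eqP.
Qed.

Lemma derive_grad n (f : 'rV[R]_n -> R) x v :
  differentiable f x -> 'D_v f x = dotv v (grad f x).
Proof.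
move=> df; rewrite deriveE // {1}(row_sum_delta v) linear_sum.
by apply: eq_bigr => j _; rewrite linearZ /= mxE /pd deriveE.
Qed.

End DotProduct.

Section NeumannBoundary.
Context {R : realType} {n : nat}.
Variables (rho w : 'rV[R]_n -> R) (x : 'rV[R]_n).
Hypotheses (rho_diff : forall y, differentiable rho y)
  (pd_rho_diff : forall i, differentiable (pd i rho) x).

Lemma convex_boundary_hessian_ge0 tau :
  (forall y z l, rho y < 0 -> rho z < 0 -> 0 <= l -> l <= 1 ->
    rho ((1 - l) *: y + l *: z) < 0) ->
  rho x = 0 -> dotv tau (grad rho x) = 0 ->
  0 <= \sum_(i < n) tau 0 i * 'D_tau (pd i rho) x.
Proof.
move=> rho_convex rhox0 tau_tangent.
have DrhoE : 'D_tau rho = \sum_(i < n) (tau 0 i *: pd i rho).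
  apply/funext => y; rewrite fct_sumE derive_grad //= /dotv.
  by apply: eq_bigr => i _; rewrite mxE.
have dpd i : derivable (tau 0 i *: pd i rho) x tau.
  by apply: derivableZ; apply: diff_derivable.
have drho y : derivable rho y tau by apply: diff_derivable.
have := convex_sublevel_derive2_ge0 _ _ _ drho rho_convex rhox0.
rewrite derive_grad // DrhoE derive_sum //.
move=> /(_ tau_tangent (derivable_sum dpd)).
suff -> : \sum_(i < n) tau 0 i * 'D_tau (pd i rho) x =
  \sum_(i < n) 'D_tau (tau 0 i *: pd i rho) x by [].
by apply: eq_bigr => i _; rewrite deriveZ //; apply: diff_derivable.
Qed.

Hypotheses (w_near : \forall y \near x, differentiable w y)
  (pd_w_diff : forall i, differentiable (pd i w) x).

Lemma neumann_tangential_derive :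
  rho x = 0 -> grad rho x != 0 ->
  (forall y, rho y = 0 -> dotv (grad w y) (grad rho y) = 0) ->
  \sum_(j < n) 'D_(grad w x) (pd j w) x * pd j rho x =
  - \sum_(i < n) grad w x 0 i * 'D_(grad w x) (pd i rho) x.
Proof.
move=> rhox0 N_neq0 neumann.
have hE : (fun y => dotv (grad w y) (grad rho y)) =
    (fun y => \sum_(i < n) pd i w y * pd i rho y).
  by apply/funext => y; apply: eq_bigr => i _; rewrite !mxE.
have h_diff : differentiable (fun y => dotv (grad w y) (grad rho y)) x.
  rewrite hE (_ : (fun y => _) = \sum_(i < n) (pd i w * pd i rho)).
    by apply: differentiable_sum => i; apply: differentiableM.
  by rewrite fct_sumE.
have Dh0 : 'D_(grad w x) (fun y => dotv (grad w y) (grad rho y)) x = 0.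
  rewrite deriveE //; apply: (@diff_tangent_eq0 _ _ rho _ x (grad rho x)) => //.
  - by move=> y; apply: differentiable_continuous.
  - by rewrite -deriveE // derive_grad // dotvv_gt0.
  - by rewrite -deriveE // derive_grad // neumann.
move: Dh0; rewrite hE derive_sum_mul => [|i|i]; last 2 first.
- exact/diff_derivable/pd_w_diff.
- exact/diff_derivable/pd_rho_diff.
rewrite big_split /= => /eqP; rewrite addr_eq0 => /eqP ->; congr (- _).
by apply: eq_bigr => i _; rewrite mxE.
Qed.

Lemma pd_area_element j :
  pd j (fun y => Num.sqrt (1 + dotv (grad w y) (grad w y))) x =
  (Num.sqrt (1 + dotv (grad w x) (grad w x)))^-1 * 'D_(grad w x) (pd j w) x.
Proof.
have SE : (fun y => 1 + dotv (grad w y) (grad w y)) =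
    cst 1 + (fun y => \sum_(i < n) pd i w y * pd i w y).
  by apply/funext => y /=; congr (1 + _); apply: eq_bigr => i _; rewrite !mxE.
have sum_diff : differentiable (fun y => \sum_(i < n) pd i w y * pd i w y) x.
  rewrite (_ : (fun y => _) = \sum_(i < n) (pd i w * pd i w)); last by rewrite fct_sumE.
  by apply: differentiable_sum => i; apply: differentiableM.
have S_gt0 : 0 < 1 + dotv (grad w x) (grad w x) by rewrite ltr_wpDr ?dotvv_ge0.
rewrite /pd derive_sqrt_comp //; last by rewrite SE; apply/diff_derivable/differentiableD.
rewrite SE deriveD ?derive_cst ?add0r; last 2 first.
- exact: derivable_cst.
- exact: diff_derivable.
rewrite derive_sum_mul => [|i|i]; last 2 first.
- exact/diff_derivable/pd_w_diff.
- exact/diff_derivable/pd_w_diff.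
rewrite [in RHS]derive_grad; last exact: pd_w_diff.
have mixed i : pd j (pd i w) x = pd i (pd j w) x.
  exact: derive_mixedC w_near (pd_w_diff i) (pd_w_diff j).
have -> : \sum_(i < n) ('D_(evec R j) (pd i w) x * pd i w x
                         + pd i w x * 'D_(evec R j) (pd i w) x) =
    2 * dotv (grad w x) (grad (pd j w) x).
  rewrite mulr_sumr; apply: eq_bigr => i _.
  by rewrite -/(pd j (pd i w) x) mixed !mxE; ring.
have sq0 : Num.sqrt (1 + dotv (grad w x) (grad w x)) != 0 by rewrite sqrtr_eq0 -ltNge.
by field.
Qed.

Lemma grad_area_element_normal_le0 :
  (forall y z l, rho y < 0 -> rho z < 0 -> 0 <= l -> l <= 1 ->
    rho ((1 - l) *: y + l *: z) < 0) ->
  rho x = 0 -> grad rho x != 0 ->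
  (forall y, rho y = 0 -> dotv (grad w y) (grad rho y) = 0) ->
  dotv (grad (fun y => Num.sqrt (1 + dotv (grad w y) (grad w y))) x) (grad rho x) <= 0.
Proof.
move=> rho_convex rhox0 N_neq0 neumann.
have -> : dotv (grad (fun y => Num.sqrt (1 + dotv (grad w y) (grad w y))) x)
                (grad rho x) =
    (Num.sqrt (1 + dotv (grad w x) (grad w x)))^-1 *
    \sum_(j < n) 'D_(grad w x) (pd j w) x * pd j rho x.
  rewrite mulr_sumr; apply: eq_bigr => j _.
  by rewrite !mxE pd_area_element mulrA.
rewrite neumann_tangential_derive // mulrN oppr_le0.
apply: mulr_ge0; first by rewrite invr_ge0 sqrtr_ge0.
by apply: convex_boundary_hessian_ge0 => //; rewrite neumann.
Qed.

End NeumannBoundary.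

Lemma DGamma_v_cyl_normalE {R : realType} n (rho : 'rV[R]_n -> R) u x t :
  dotv (du u x t) (onormal rho x) = 0 ->
  dotv (DGamma_v u x t) (cyl_normal rho x) =
  dotv (grad (fun y => vfun u y t) x) (onormal rho x).
Proof.
move=> neumann; rewrite /DGamma_v dotvBl dotvZl.
have -> : dotv (nvec u x t) (cyl_normal rho x) = 0.
  by rewrite /nvec /cyl_normal dotvZl dotv_row_mx dotvNl dotv0r addr0 neumann oppr0 mulr0.
by rewrite mulr0 subr0 /Dv /cyl_normal dotv_row_mx dotv0r addr0.
Qed.

Lemma dotv_onormal_eq0 {R : realType} n (rho : 'rV[R]_n -> R) a y :
  dotv a (onormal rho y) = 0 -> dotv a (grad rho y) = 0.
Proof.
have [-> _|N_neq0] := eqVneq (grad rho y) 0; first exact: dotv0r.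
rewrite /onormal dotvZr => /eqP; rewrite mulf_eq0 invr_eq0 sqrtr_eq0.
by rewrite leNgt dotvv_gt0 //= => /eqP.
Qed.

Theorem mainTheorem4 (R : realType) (n : nat)
  (rho : 'rV[R]_n -> R)
  (f : 'rV[R]_n -> R -> R -> 'rV[R]_(n + 1))
  (u : 'rV[R]_n -> R -> R) :
  smooth_bounded_convex_domain rho ->
  (* u(.,t) is C^2 up to the boundary, for each t > 0 *)
  (forall t : R, 0 < t -> exists U : set 'rV[R]_n,
      open U /\ [set x | rho x <= 0] `<=` U /\ Ck_on U 2 (fun y => u y t)) ->
  (* u is differentiable in t inside Omega, t > 0 *)
  (forall x t, rho x < 0 -> 0 < t -> derivable (fun s => u x s) t 1) ->
  (* the PDE *)
  (forall x t, rho x < 0 -> 0 < t ->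
     derive1 (fun s => u x s) t / vfun u x t =
     divg (fun y => (vfun u y t)^-1 *: du u y t) x
     + dotv (f x (u x t) t) (nvec u x t)) ->
  (* Neumann boundary condition *)
  (forall x t, rho x = 0 -> 0 < t -> dotv (du u x t) (onormal rho x) = 0) ->
  forall x t, rho x = 0 -> 0 < t ->
    dotv (DGamma_v u x t) (cyl_normal rho x) <= 0.
Proof.
move=> [rho_smooth grad_rho_neq0 _ Omega_convex _] u_C2 _ _ neumann x t rhox0 t_gt0.
have [U [U_open [closure_sub_U [u_diff pd_u_C1]]]] := u_C2 t t_gt0.
have [rho_diff pd_rho_C1] := rho_smooth 2%N.
have Ux : U x by apply: closure_sub_U; rewrite /= rhox0.
rewrite DGamma_v_cyl_normalE ?neumann // /onormal dotvZr.
apply: mulr_ge0_le0; first by rewrite invr_ge0 sqrtr_ge0.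
apply: (@grad_area_element_normal_le0 _ _ _ _ x) => //.
- by move=> y; apply: rho_diff.
- by move=> i; apply: (pd_rho_C1 i).1.
- by apply: filterS u_diff _; apply: open_nbhs_nbhs.
- by move=> i; apply: (pd_u_C1 i).1.
- by move=> y z l rhoy rhoz l0 l1; apply: Omega_convex.
- exact: grad_rho_neq0.
- by move=> y rhoy0; apply: dotv_onormal_eq0; apply: neumann.
Qed.
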